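(* Let $D=D_1\cup D_2$ be the disjoint union of oriented virtual singular link diagrams $D_1$ and $D_2$ (with no crossings between $D_1$ and $D_2$). Then $R(D)=\phi(D)h+\psi(D)$ where $$\phi(D)=\phi(D_1)\psi(D_2)+\psi(D_1)\phi(D_2),\qquad \psi(D)=\phi(D_1)\phi(D_2)+\psi(D_1)\psi(D_2).$$
   Context: An oriented virtual singular link diagram is a generic immersion of finitely many oriented circles into $\mathbb{R}^2$ with finitely many transverse double points, each decorated as a classical crossing (with over/under information and the usual sign $\pm1$), a singular crossing, or a virtual crossing. At a classical or singular crossing, the oriented resolution replaces it by two disjoint arcs respecting orientation; the disoriented resolution replaces it by one arc joining the two incoming ends with a sink bivalent vertex and one arc joining the two outgoing ends with a source bivalent vertex. Virtual crossings are kept. A state $S$ of $D$ is a choice of resolution at every classical and singular crossing; it is a collection of immersed closed curves (all intersections virtual) with bivalent vertices, edge orientations alternating. $\|S\|$ = number of closed curves; $c(D)$ = number of classical crossings; $a(S)$ = #(negative classical crossings with oriented resolution) $-$ #(positive classical crossings with oriented resolution); $b(S)$ the same for disoriented resolutions; $\alpha(S),\beta(S)$ = numbers of singular crossings with oriented, resp. disoriented, resolution. An edge of $S$ is an arc between consecutive bivalent vertices (a closed curve without vertices is one edge); a weight map is $\tau:E(S)\to\{\pm1\}$ with different values on edges sharing a vertex; the parity $i(S)=\prod_v\tau(e_v)\tau(e_v')$ over all virtual crossings $v$, with $e_v,e_v'$ the edges meeting at $v$ (independent of $\tau$). With $\overline{R}(S)=A^{2a(S)+4b(S)}(-A^2-A^{-2})^{\alpha(S)+\|S\|}(-A^4-A^{-4})^{\beta(S)}$: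 $R(D)=(-1)^{c(D)}\sum_S\overline{R}(S)h^{\frac{1-i(S)}{2}}$, $\phi(D)=(-1)^{c(D)}\sum_{S:\,i(S)=-1}\overline{R}(S)$, $\psi(D)=(-1)^{c(D)}\sum_{S:\,i(S)=1}\overline{R}(S)$, so that $R(D)=\phi(D)h+\psi(D)$; the same definitions apply to $D_1$ and $D_2$. *)

From HB Require Import structures.
From mathcomp Require Import all_boot all_order all_algebra all_fingroup.
Set Implicit Arguments. Unset Strict Implicit. Unset Printing Implicit Defensive.
Import Order.TTheory GRing.Theory Num.Theory.

(* Decoration of a double point: classical crossing with its sign
   (true = positive, false = negative), singular crossing, virtual crossing. *)
Inductive ckind := Classical of bool | Singular | Virtual.

Definition is_virtual (k : ckind) := if k is Virtual then true else false.
Definition is_classical (k : ckind) := if k is Classical _ then true else false.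
Definition is_pos (k : ckind) := if k is Classical true then true else false.
Definition is_neg (k : ckind) := if k is Classical false then true else false.
Definition is_sing (k : ckind) := if k is Singular then true else false.

(* A diagram: a finite set of double points [cr]; at double point x the two
   strands through x are indexed by b : bool, strand b entering x at the
   incoming end (x,b) and leaving at the outgoing end (x,b).  The arcs of the
   diagram between double points are encoded by the bijection [nxt]: the arc
   leaving the outgoing end (x,b) arrives at the incoming end [nxt (x,b)].
   [nfree] is the number of component circles without any double point. *)
Record vsdiagram := VSDiagram {
  cr : finType;
  kind : cr -> ckind;
  nxt : {perm (cr * bool)};
  nfree : nat }.

Section Diagram.
Variable D : vsdiagram.

(* segments of the diagram (arcs between consecutive double points),
   indexed by their starting outgoing end *)
Definition seg := (cr D * bool)%type.
(* ends at double points: (x, strand, is_outgoing) *)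
Definition endpt := (cr D * bool * bool)%type.

(* A state: a choice of resolution at every classical and singular crossing;
   S x = true means disoriented, false means oriented.  Virtual crossings are
   kept; we normalise S x = false there so that states are in bijection with
   choices at the classical and singular crossings. *)
Definition state := {ffun cr D -> bool}.
Definition is_state (S : state) := [forall x, is_virtual (kind x) ==> ~~ S x].
Definition dis (S : state) (x : cr D) := S x && ~~ is_virtual (kind x).

(* How the four ends at a double point are joined in the state S:
   disoriented: in_1 -- in_2 (sink), out_1 -- out_2 (source);
   virtual: in_b -- out_b (crossing kept);
   oriented: in_b -- out_(~b). *)
Definition pairp (S : state) (e : endpt) : endpt :=
  let: (x, b, o) := e in
  if dis S x then (x, ~~ b, o)
  else if is_virtual (kind x) then (x, b, ~~ o)
  else (x, ~~ b, ~~ o).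

Definition seg_of (e : endpt) : seg :=
  let: (x, b, o) := e in if o then (x, b) else ((nxt D)^-1)%g (x, b).

Definition tail (s : seg) : endpt := (s.1, s.2, true).
Definition head (s : seg) : endpt := ((nxt D s).1, (nxt D s).2, false).

Definition adj (S : state) : rel seg := fun s t =>
  (seg_of (pairp S (tail s)) == t) || (seg_of (pairp S (head s)) == t).

Definition ncurves (S : state) : nat := n_comp (adj S) predT + nfree D.

(* weight maps, viewed on segments: constant along an edge of S (across
   virtual crossings and oriented resolutions), and taking different values
   on the two edges at a bivalent vertex (disoriented resolution). *)
Definition weight_map (S : state) (tau : {ffun seg -> bool}) : bool :=
  [forall e : endpt,
    (tau (seg_of e) == tau (seg_of (pairp S e))) == ~~ dis S e.1.1].

(* tau encodes the sign (-1)^(tau); parity bit: true iff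
   prod_v tau(e_v) tau(e_v') = -1 *)
Definition vpar (tau : {ffun seg -> bool}) : bool :=
  \big[addb/false]_(x | is_virtual (kind x))
     (tau (seg_of (x, true, false)) (+) tau (seg_of (x, false, false))).

(* i(S) = -1 iff ipar S = true; computed with any weight map *)
Definition ipar (S : state) : bool :=
  if [pick tau | weight_map S tau] is Some tau then vpar tau else false.

(* well-definedness of the parity as asserted in the paper: weight maps
   exist and i(S) does not depend on the weight map *)
Definition parity_wd : Prop :=
  forall S : state, is_state S ->
    (exists tau, weight_map S tau) /\
    (forall t1 t2, weight_map S t1 -> weight_map S t2 -> vpar t1 = vpar t2).

Definition ncl : nat := #|[pred x : cr D | is_classical (kind x)]|.

Definition aS (S : state) : int :=
  (#|[pred x : cr D | is_neg (kind x) && ~~ S x]|%:Z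
   - #|[pred x : cr D | is_pos (kind x) && ~~ S x]|%:Z)%R.
Definition bS (S : state) : int :=
  (#|[pred x : cr D | is_neg (kind x) && S x]|%:Z
   - #|[pred x : cr D | is_pos (kind x) && S x]|%:Z)%R.
Definition alphaS (S : state) : nat := #|[pred x : cr D | is_sing (kind x) && ~~ S x]|.
Definition betaS (S : state) : nat := #|[pred x : cr D | is_sing (kind x) && S x]|.

Local Open Scope ring_scope.
Variable K : comUnitRingType.
Variables A h : K.

Definition Rbar (S : state) : K :=
  A ^ (2 * aS S + 4 * bS S)
  * (- A ^+ 2 - A ^- 2) ^+ (alphaS S + ncurves S)
  * (- A ^+ 4 - A ^- 4) ^+ betaS S.

Definition Rinv : K :=
  (-1) ^+ ncl * \sum_(S : state | is_state S) Rbar S * h ^+ (ipar S).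
Definition phi : K :=
  (-1) ^+ ncl * \sum_(S : state | is_state S && ipar S) Rbar S.
Definition psi : K :=
  (-1) ^+ ncl * \sum_(S : state | is_state S && ~~ ipar S) Rbar S.

End Diagram.

Section Union.
Variables D1 D2 : vsdiagram.
Definition ucr := (cr D1 + cr D2)%type.

Definition ukind (x : ucr) : ckind :=
  match x with inl y => kind y | inr y => kind y end.

Definition unxt_fun (p : ucr * bool) : ucr * bool :=
  match p with
  | (inl y, b) => let q := nxt D1 (y, b) in (inl q.1, q.2)
  | (inr y, b) => let q := nxt D2 (y, b) in (inr q.1, q.2)
  end.
Definition unxt_inv (p : ucr * bool) : ucr * bool :=
  match p with
  | (inl y, b) => let q := ((nxt D1)^-1)%g (y, b) in (inl q.1, q.2)
  | (inr y, b) => let q := ((nxt D2)^-1)%g (y, b) in (inr q.1, q.2)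
  end.

Lemma unxt_funK : cancel unxt_fun unxt_inv.
Proof.
case=> [[y|y] b] /=.
- by rewrite -surjective_pairing permK.
- by rewrite -surjective_pairing permK.
Qed.

Definition dunion : vsdiagram :=
  @VSDiagram ucr ukind (perm (can_inj unxt_funK)) (nfree D1 + nfree D2).
End Union.

From Pilot Require Import Defs.
From HB Require Import structures.
From mathcomp Require Import all_boot all_order all_algebra all_fingroup.
From mathcomp Require Import ring.
Set Implicit Arguments. Unset Strict Implicit. Unset Printing Implicit Defensive.
Import GRing.Theory.

(* A state of D1 u D2 is a pair of states of D1 and D2, and nothing in the
   state of one part interacts with the other: the curves of the joined state
   are those of the two parts, all crossing counts add up, and weight maps
   glue and restrict.  Hence Rbar is multiplicative and the parity is the sum
   of the parities, i(S) = i(S1) i(S2).  Splitting the state sum of D by the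
   parities of the two parts gives the formulas for phi and psi. *)

Lemma n_comp_embedding (T T' : finType) (h : T' -> T) (e : rel T) (e' : rel T')
    (a : {pred T}) :
  connect_sym e -> connect_sym e' -> closed e a -> injective h ->
  a =i codom h -> (forall x' y', e (h x') (h y') = e' x' y') ->
  n_comp e a = n_comp e' predT.
Proof.
move=> sym_e sym_e' cl_a inj_h a_codom e_h.
have adj_h : rel_adjunction h e e' a.
  apply: (strict_adjunction sym_e' cl_a inj_h) => [|x' y' _].
    by apply/subsetP => x; rewrite a_codom.
  exact: e_h.
rewrite (adjunction_n_comp h sym_e sym_e' cl_a adj_h).
by apply: eq_n_comp_r => x'; rewrite !inE a_codom codom_f.
Qed.

Lemma card_sum_pred (T1 T2 : finType) (P : pred (T1 + T2)) :
  #|[pred x | P x]| = #|[pred y | P (inl y)]| + #|[pred y | P (inr y)]|.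
Proof.
rewrite -!sum1_card big_sumType.
by congr (_ + _); apply: eq_bigl => y; rewrite !inE.
Qed.

Section States.
Variables (D : vsdiagram) (S : state D).
Implicit Types (s t : seg D) (e : endpt D).

Lemma pairpK : involutive (pairp S).
Proof.
case=> [[x b] o]; rewrite /pairp.
by case d: (dis S x); case v: (is_virtual (kind x)); rewrite /= ?d ?v ?negbK.
Qed.

Lemma seg_of_tail s : seg_of (tail s) = s.
Proof. by case: s. Qed.

Lemma seg_of_head s : seg_of (Defs.head s) = s.
Proof. by rewrite /seg_of /Defs.head -surjective_pairing permK. Qed.

Lemma tail_or_head_seg_of e :
  (tail (seg_of e) == e) || (Defs.head (seg_of e) == e).
Proof.
case: e => [[x b] [|]]; first by rewrite eqxx.
by rewrite /seg_of /Defs.head permKV /= eqxx orbT.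
Qed.

Lemma adj_sym : symmetric (adj S).
Proof.
have adj_pairp e : adj S (seg_of (pairp S e)) (seg_of e).
  by case/orP: (tail_or_head_seg_of (pairp S e)) => /eqP E;
    rewrite /adj E pairpK eqxx ?orbT.
suff adjW s t : adj S s t -> adj S t s by move=> s t; apply/idP/idP; apply: adjW.
case/orP => /eqP <-.
  by have := adj_pairp (tail s); rewrite seg_of_tail.
by have := adj_pairp (Defs.head s); rewrite seg_of_head.
Qed.

Lemma connect_sym_adj : connect_sym (adj S).
Proof. exact/sym_connect_sym/adj_sym. Qed.

Lemma ipar_weight_map tau :
  parity_wd D -> is_state S -> weight_map S tau -> ipar S = vpar tau.
Proof.
move=> /(_ S) wd /wd[[tau0 w_tau0] vpar_eq] w_tau.
rewrite /ipar; case: pickP => [tau' w_tau'|/(_ tau0)]; last by rewrite w_tau0.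
exact: vpar_eq.
Qed.

End States.

Section ParitySum.
Variables (K : comUnitRingType) (A : K).
Local Open Scope ring_scope.

Definition parity_sum (D : vsdiagram) (b : bool) : K :=
  \sum_(S : state D | is_state S && (ipar S == b)) Rbar A S.

Lemma phi_parity_sum D : phi D A = (-1) ^+ ncl D * parity_sum D true.
Proof. by congr (_ * _); apply: eq_bigl => S; rewrite eqb_id. Qed.

Lemma psi_parity_sum D : psi D A = (-1) ^+ ncl D * parity_sum D false.
Proof. by congr (_ * _); apply: eq_bigl => S; rewrite eqbF_neg. Qed.

Lemma Rinv_phi_psi D (h : K) : Rinv D A h = phi D A * h + psi D A.
Proof.
rewrite /Rinv /phi /psi (bigID (fun S => ipar S)) /= mulrDr -mulrA big_distrl.
congr (_ * _ + _ * _); apply: eq_bigr => S /andP[_].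
  by move->; rewrite expr1.
by move/negbTE->; rewrite expr0 mulr1.
Qed.

End ParitySum.

Section DisjointUnion.
Variables D1 D2 : vsdiagram.
Local Notation D := (dunion D1 D2).

Lemma nxt_dunion p : nxt D p = unxt_fun p.
Proof. by rewrite permE. Qed.

Lemma nxtV_dunion p : ((nxt D)^-1)%g p = unxt_inv p.
Proof.
have unxt_invK : cancel (@unxt_inv D1 D2) (@unxt_fun D1 D2).
  by case=> [[y|y] b] /=; rewrite -surjective_pairing permKV.
by rewrite -{1}(unxt_invK p) -nxt_dunion permK.
Qed.

Definition segL (s : seg D1) : seg D := (inl s.1, s.2).
Definition segR (s : seg D2) : seg D := (inr s.1, s.2).
Definition endL (e : endpt D1) : endpt D := (inl e.1.1, e.1.2, e.2).
Definition endR (e : endpt D2) : endpt D := (inr e.1.1, e.1.2, e.2).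

Lemma segL_inj : injective segL. Proof. by case=> a b [c d] [-> ->]. Qed.
Lemma segR_inj : injective segR. Proof. by case=> a b [c d] [-> ->]. Qed.

Lemma seg_of_endL e : seg_of (endL e) = segL (seg_of e).
Proof. by case: e => [[y b] [|]]; rewrite /seg_of /= ?nxtV_dunion. Qed.
Lemma seg_of_endR e : seg_of (endR e) = segR (seg_of e).
Proof. by case: e => [[y b] [|]]; rewrite /seg_of /= ?nxtV_dunion. Qed.

Lemma tail_segL s : tail (segL s) = endL (tail s). Proof. by []. Qed.
Lemma tail_segR s : tail (segR s) = endR (tail s). Proof. by []. Qed.

Lemma head_segL s : Defs.head (segL s) = endL (Defs.head s).
Proof. by case: s => y b; rewrite /Defs.head nxt_dunion. Qed.
Lemma head_segR s : Defs.head (segR s) = endR (Defs.head s).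
Proof. by case: s => y b; rewrite /Defs.head nxt_dunion. Qed.

Definition join_state (S1 : state D1) (S2 : state D2) : state D :=
  [ffun x => match x with inl y => S1 y | inr y => S2 y end].

Definition split_state (S : state D) : state D1 * state D2 :=
  ([ffun y => S (inl y)], [ffun y => S (inr y)]).

Lemma join_state_bij : bijective (fun p => join_state p.1 p.2).
Proof.
exists split_state => [[S1 S2]|S].
  by congr pair; apply/ffunP => y; rewrite !ffunE.
by apply/ffunP => -[y|y]; rewrite !ffunE.
Qed.

Lemma sum_join_state (R : nmodType) (P : pred (state D)) (F : state D -> R) :
  (\sum_(S | P S) F S =
   \sum_(p | P (join_state p.1 p.2)) F (join_state p.1 p.2))%R.
Proof. exact/reindex/onW_bij/join_state_bij. Qed.

Lemma is_state_join S1 S2 :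
  is_state (join_state S1 S2) = is_state S1 && is_state S2.
Proof.
apply/forallP/andP => [st|[/forallP st1 /forallP st2]].
  by split; apply/forallP => y; [have := st (inl y) | have := st (inr y)];
    rewrite ffunE.
by case=> y; rewrite ffunE; [apply: st1 | apply: st2].
Qed.

Lemma ncl_dunion : ncl D = ncl D1 + ncl D2.
Proof. exact: card_sum_pred. Qed.

Lemma card_join_state (P : ckind -> bool -> bool) S1 S2 :
  #|[pred x : cr D | P (kind x) (join_state S1 S2 x)]| =
  #|[pred y | P (kind y) (S1 y)]| + #|[pred y | P (kind y) (S2 y)]|.
Proof.
by rewrite card_sum_pred; congr (_ + _); apply: eq_card => y; rewrite !inE ffunE.
Qed.

Section JoinedState.
Variables (S1 : state D1) (S2 : state D2).
Local Notation S := (join_state S1 S2).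

Lemma dis_joinL y : dis S (inl y) = dis S1 y.
Proof. by rewrite /dis ffunE. Qed.
Lemma dis_joinR y : dis S (inr y) = dis S2 y.
Proof. by rewrite /dis ffunE. Qed.

Lemma pairp_endL e : pairp S (endL e) = endL (pairp S1 e).
Proof.
case: e => [[y b] o]; rewrite /pairp /endL /= dis_joinL.
by case: (dis S1 y); case: (is_virtual (kind y)).
Qed.
Lemma pairp_endR e : pairp S (endR e) = endR (pairp S2 e).
Proof.
case: e => [[y b] o]; rewrite /pairp /endR /= dis_joinR.
by case: (dis S2 y); case: (is_virtual (kind y)).
Qed.

Lemma adj_segLL s t : adj S (segL s) (segL t) = adj S1 s t.
Proof.
by rewrite /adj tail_segL head_segL !pairp_endL !seg_of_endL !(inj_eq segL_inj).
Qed.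
Lemma adj_segRR s t : adj S (segR s) (segR t) = adj S2 s t.
Proof.
by rewrite /adj tail_segR head_segR !pairp_endR !seg_of_endR !(inj_eq segR_inj).
Qed.
Lemma adj_segLR s t : adj S (segL s) (segR t) = false.
Proof. by rewrite /adj tail_segL head_segL !pairp_endL !seg_of_endL. Qed.
Lemma adj_segRL s t : adj S (segR s) (segL t) = false.
Proof. by rewrite /adj tail_segR head_segR !pairp_endR !seg_of_endR. Qed.

Definition on_left := [pred u : seg D | if u.1 is inl _ then true else false].

Lemma on_left_codom : on_left =i codom segL.
Proof.
case=> [[y|y] b]; rewrite !inE /=.
  by rewrite -[(_, b)]/(segL (y, b)) codom_f.
by apply/esym/negbTE/codomP => -[[] ? ?].
Qed.

Lemma not_on_left_codom : [predC on_left] =i codom segR.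
Proof.
case=> [[y|y] b]; rewrite !inE /=.
  by apply/esym/negbTE/codomP => -[[] ? ?].
by rewrite -[(_, b)]/(segR (y, b)) codom_f.
Qed.

Lemma closed_on_left : closed (adj S) on_left.
Proof.
by case=> [[y|y] b] [[z|z] c];
  rewrite ?(adj_segLR (y, b) (z, c)) ?(adj_segRL (y, b) (z, c)).
Qed.

Lemma ncurves_join : ncurves S = ncurves S1 + ncurves S2.
Proof.
have closed_right : closed (adj S) [predC on_left].
  by move=> u v /closed_on_left; rewrite !inE => ->.
rewrite /ncurves /= (n_compC on_left) addnACA; congr (_ + _ + (_ + _)).
  exact: n_comp_embedding (connect_sym_adj S) (connect_sym_adj S1)
    closed_on_left segL_inj on_left_codom adj_segLL.
exact: n_comp_embedding (connect_sym_adj S) (connect_sym_adj S2)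
  closed_right segR_inj not_on_left_codom adj_segRR.
Qed.

Local Open Scope ring_scope.

Lemma aS_join : aS S = aS S1 + aS S2.
Proof.
rewrite /aS (card_join_state (fun k b => is_neg k && ~~ b)).
by rewrite (card_join_state (fun k b => is_pos k && ~~ b)) !PoszD; ring.
Qed.

Lemma bS_join : bS S = bS S1 + bS S2.
Proof.
rewrite /bS (card_join_state (fun k b => is_neg k && b)).
by rewrite (card_join_state (fun k b => is_pos k && b)) !PoszD; ring.
Qed.

Lemma alphaS_join : alphaS S = (alphaS S1 + alphaS S2)%N.
Proof. exact: (card_join_state (fun k b => is_sing k && ~~ b)). Qed.

Lemma betaS_join : betaS S = (betaS S1 + betaS S2)%N.
Proof. exact: (card_join_state (fun k b => is_sing k && b)). Qed.

Lemma Rbar_join (K : comUnitRingType) (A : K) :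
  A \is a GRing.unit -> Rbar A S = Rbar A S1 * Rbar A S2.
Proof.
move=> uA; rewrite /Rbar aS_join bS_join alphaS_join betaS_join ncurves_join.
have -> : 2 * (aS S1 + aS S2) + 4 * (bS S1 + bS S2) =
          (2 * aS S1 + 4 * bS S1) + (2 * aS S2 + 4 * bS S2) by ring.
rewrite exprzDr // addnACA !exprD; ring.
Qed.

End JoinedState.
End DisjointUnion.

Section WeightMaps.
Variables D1 D2 : vsdiagram.
Local Notation D := (dunion D1 D2).
Local Notation weight D := {ffun seg D -> bool}.

Definition join_weight (tau1 : weight D1) (tau2 : weight D2) : weight D :=
  [ffun u => match u.1 with inl y => tau1 (y, u.2) | inr y => tau2 (y, u.2) end].
Definition weightL (tau : weight D) : weight D1 := [ffun s => tau (segL D2 s)].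
Definition weightR (tau : weight D) : weight D2 := [ffun s => tau (segR D1 s)].

Lemma join_weightL tau1 tau2 s : join_weight tau1 tau2 (segL D2 s) = tau1 s.
Proof. by case: s => y b; rewrite ffunE. Qed.
Lemma join_weightR tau1 tau2 s : join_weight tau1 tau2 (segR D1 s) = tau2 s.
Proof. by case: s => y b; rewrite ffunE. Qed.

Lemma vpar_dunion tau : vpar tau = vpar (weightL tau) (+) vpar (weightR tau).
Proof.
rewrite /vpar big_sumType /=; congr addb; apply: eq_bigr => y _;
  by rewrite !ffunE !nxtV_dunion.
Qed.

Variables (S1 : state D1) (S2 : state D2).
Local Notation S := (join_state S1 S2).

Lemma weight_mapL tau : weight_map S tau -> weight_map S1 (weightL tau).
Proof.
move/forallP=> w; apply/forallP=> e; have := w (endL D2 e).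
rewrite pairp_endL !seg_of_endL !ffunE.
by case: e => [[y b] o]; rewrite /= dis_joinL.
Qed.
Lemma weight_mapR tau : weight_map S tau -> weight_map S2 (weightR tau).
Proof.
move/forallP=> w; apply/forallP=> e; have := w (endR D1 e).
rewrite pairp_endR !seg_of_endR !ffunE.
by case: e => [[y b] o]; rewrite /= dis_joinR.
Qed.

Lemma weight_map_join tau1 tau2 :
  weight_map S1 tau1 -> weight_map S2 tau2 ->
  weight_map S (join_weight tau1 tau2).
Proof.
move=> /forallP w1 /forallP w2; apply/forallP => -[[[y|y] b] o].
  have := w1 (y, b, o); rewrite -[((inl y, b), o)]/(endL D2 (y, b, o)).
  by rewrite pairp_endL !seg_of_endL !join_weightL /= dis_joinL.
have := w2 (y, b, o); rewrite -[((inr y, b), o)]/(endR D1 (y, b, o)).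
by rewrite pairp_endR !seg_of_endR !join_weightR /= dis_joinR.
Qed.

Lemma ipar_join : parity_wd D1 -> parity_wd D2 -> is_state S1 -> is_state S2 ->
  ipar S = ipar S1 (+) ipar S2.
Proof.
move=> wd1 wd2 st1 st2.
have [[tau1 w1] _] := wd1 S1 st1; have [[tau2 w2] _] := wd2 S2 st2.
rewrite /ipar; case: pickP => [tau w|/(_ (join_weight tau1 tau2))]; last first.
  by rewrite weight_map_join.
rewrite vpar_dunion -(ipar_weight_map wd1 st1 (weight_mapL w)).
by rewrite -(ipar_weight_map wd2 st2 (weight_mapR w)).
Qed.

End WeightMaps.

Section StateSumOfUnion.
Variables (D1 D2 : vsdiagram) (K : comUnitRingType) (A : K).
Hypotheses (uA : A \is a GRing.unit) (wd1 : parity_wd D1) (wd2 : parity_wd D2).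
Local Open Scope ring_scope.

Lemma parity_sum_dunion b :
  parity_sum A (dunion D1 D2) b =
  \sum_(b1 : bool) parity_sum A D1 b1 * parity_sum A D2 (b1 (+) b).
Proof.
rewrite /parity_sum sum_join_state (partition_big (fun p => ipar p.1) predT) //=.
apply: eq_bigr => b1 _; rewrite big_distrlr pair_big /=.
apply: eq_big => [[S1 S2]|[S1 S2] _]; last exact: Rbar_join.
rewrite /= is_state_join.
have [st1|] := boolP (is_state S1); have [st2|] := boolP (is_state S2);
  rewrite ?andbF //= ipar_join //.
by case: (ipar S1); case: (ipar S2); case: b; case: b1.
Qed.
End StateSumOfUnion.

Unset Implicit Arguments.
Local Open Scope ring_scope.

Theorem lemma4p4 (K : comUnitRingType) (A h : K) (D1 D2 : vsdiagram) :
  A \is a GRing.unit -> parity_wd D1 -> parity_wd D2 ->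
  let D := dunion D1 D2 in
  Rinv D A h = phi D A * h + psi D A /\
  phi D A = phi D1 A * psi D2 A + psi D1 A * phi D2 A /\
  psi D A = phi D1 A * phi D2 A + psi D1 A * psi D2 A.
Proof.
move=> uA wd1 wd2 D; split; first exact: Rinv_phi_psi.
rewrite !phi_parity_sum !psi_parity_sum !parity_sum_dunion // !big_bool /=.
by rewrite ncl_dunion exprD; split; ring.
Qed.
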